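(* For every integer $n\ge 0$, $c_{11}(11n+5)\equiv c_{11}(11n+7)\equiv c_{11}(11n+9)\equiv 0\pmod 2$.
   Context: A partition of $n\ge 0$ is a finite multiset of positive integers summing to $n$. For $n\ge 0$, $c_{11}(n)$ denotes the number of pairs $(j,\lambda)$, where $j\ge 1$ is an integer and $\lambda$ is a partition of $n$, such that: each of the odd integers $1,3,\dots,2j-1$ appears in $\lambda$ at least once; odd parts are otherwise unrestricted in multiplicity; every even part of $\lambda$ is greater than $2j$; and the even parts of $\lambda$ are distinct. (A single partition is counted once for each $j$ for which these conditions hold.) *)

From mathcomp Require Import all_boot.
Set Implicit Arguments. Unset Strict Implicit. Unset Printing Implicit Defensive.

(* A partition of n is encoded by its multiplicity function: m k = number of
   times the part k occurs.  Every multiplicity of a positive part is <= n and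
   every part is <= n, so m : {ffun 'I_n.+1 -> 'I_n.+1} suffices; the
   conditions "part 0 does not occur" and "sum k * m k = n" are imposed in
   [is_partition].  This is a bijective encoding of multisets of positive
   integers summing to n. *)
Definition mult (n : nat) (m : {ffun 'I_n.+1 -> 'I_n.+1}) (k : nat) : nat :=
  if k < n.+1 then nat_of_ord (m (inord k)) else 0.

Definition is_partition (n : nat) (m : {ffun 'I_n.+1 -> 'I_n.+1}) : bool :=
  (mult m 0 == 0) && (\sum_(k < n.+1) k * mult m k == n).

Definition c11_cond (n j : nat) (m : {ffun 'I_n.+1 -> 'I_n.+1}) : bool :=
  [&& 0 < j,
      [forall i : 'I_j, 0 < mult m (2 * i + 1)],
      [forall k : 'I_n.+1,
         (~~ odd k && (0 < mult m k)) ==> ((2 * j < k) && (mult m k <= 1))]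
    & is_partition m].

(* c_11(n): number of pairs (j, lambda).  Any valid j satisfies
   j^2 = 1 + 3 + ... + (2j-1) <= n, hence j <= n, so ranging j over 'I_n.+1
   loses nothing. *)
Definition c11 (n : nat) : nat :=
  #|[set p : 'I_n.+1 * {ffun 'I_n.+1 -> 'I_n.+1} | c11_cond (nat_of_ord p.1) p.2]|.

From mathcomp Require Import all_boot all_order all_algebra.
From mathcomp Require Import zify ring.
Set Implicit Arguments. Unset Strict Implicit. Unset Printing Implicit Defensive.
Import GRing.Theory.

(* We compute modulo 2 and modulo X^(N+1), i.e. with polynomials over a
   domain of characteristic 2, where all signs disappear.  Counting the pairs
   (j, lambda) part by part, c11(N) is the coefficient of X^N in
     C = sum_(j >= 1) X^(j^2) prod_(i <= j) 1/(1 + X^(2i-1)) prod_(i > j) (1 + X^(2i))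
   (c11_coef, partseries_prod).  Multiplied by D = prod_i (1 + X^(2i-1)) and
   completed by the term j = 0, this is a specialization of the two-parameter
   sum qsum, whose telescoping recurrence gives D * E with E = prod_i (1 + X^(2i))
   (qsum2_product).  Gauss's identity E = D * sum_j X^(j(j+1)/2) (gsum_gauss) and
   cancellation of D then give  C = E + sum_j X^(j(j+1)/2)  (c11_series_congr).
   By Euler's pentagonal theorem, another instance of the qsum recurrence
   (qsum_euler), E is the square of the pentagonal series, so C is supported on
   twice the pentagonal numbers and on the triangular numbers; neither kind of
   exponent is 5, 7 or 9 modulo 11. *)

Local Open Scope ring_scope.

Section TruncatedCongruence.
Variable R : idomainType.
Implicit Types (p q r s : {poly R}) (M : nat).

Definition congX M p q := 'X^M %| (p - q).

Lemma congX_refl M p : congX M p p.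
Proof. by rewrite /congX subrr dvdp0. Qed.

Lemma congX_sym M p q : congX M p q -> congX M q p.
Proof. by rewrite /congX -opprB dvdpNr. Qed.

Lemma congX_trans M p q r : congX M p q -> congX M q r -> congX M p r.
Proof. by rewrite /congX => pq qr; have := dvdp_add pq qr; rewrite addrA subrK. Qed.

Lemma congX_add M p q r s : congX M p q -> congX M r s -> congX M (p + r) (q + s).
Proof. by rewrite /congX => pq rs; have := dvdp_add pq rs; rewrite opprD addrACA. Qed.

Lemma congX_mull M p q r : congX M p q -> congX M (r * p) (r * q).
Proof. by rewrite /congX -mulrBr; apply: dvdp_mull. Qed.

Lemma congX_mul M p q r s : congX M p q -> congX M r s -> congX M (p * r) (q * s).
Proof.
move=> pq rs; apply: congX_trans (congX_mull q rs).
by rewrite ![_ * r]mulrC; apply: congX_mull.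
Qed.

Lemma congX_le M M' p q : (M' <= M)%N -> congX M p q -> congX M' p q.
Proof. by move=> le; apply: dvdp_trans; apply: dvdp_exp2l. Qed.

Lemma congX_monomial M e r : (M <= e)%N -> congX M ('X^e * r) 0.
Proof. by rewrite /congX subr0 => le; apply: dvdp_mulr; apply: dvdp_exp2l. Qed.

Lemma congX_addr M p q : congX M q 0 -> congX M (p + q) p.
Proof. by move=> q0; rewrite -{2}(addr0 p); apply: congX_add (congX_refl _ _) q0. Qed.

Lemma congX_coef M p q i : congX M p q -> (i < M)%N -> p`_i = q`_i.
Proof.
rewrite /congX => /(Pdiv.IdomainMonic.dvdpP (monicXn R M)) [c pq] lt.
apply/eqP; rewrite -subr_eq0 -coefB pq.
by rewrite coefMXn lt.
Qed.

Lemma congX_sum M (I : Type) (r : seq I) (P : pred I) (f g : I -> {poly R}) :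
  (forall i, P i -> congX M (f i) (g i)) ->
  congX M (\sum_(i <- r | P i) f i) (\sum_(i <- r | P i) g i).
Proof. by move=> fg; apply: (big_ind2 (congX M)) => //; [apply: congX_refl | apply: congX_add]. Qed.

Lemma congX_prod M (I : Type) (r : seq I) (P : pred I) (f g : I -> {poly R}) :
  (forall i, P i -> congX M (f i) (g i)) ->
  congX M (\prod_(i <- r | P i) f i) (\prod_(i <- r | P i) g i).
Proof. by move=> fg; apply: (big_ind2 (congX M)) => //; [apply: congX_refl | apply: congX_mul]. Qed.

Lemma congX_sum0 M (I : Type) (r : seq I) (P : pred I) (f : I -> {poly R}) :
  (forall i, P i -> congX M (f i) 0) -> congX M (\sum_(i <- r | P i) f i) 0.
Proof. by move=> f0; have := congX_sum r (g := fun=> 0) f0; rewrite big1_eq. Qed.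

Lemma congX_cancel M d p q : ~~ root d 0 -> congX M (d * p) (d * q) -> congX M p q.
Proof.
move=> d0; rewrite /congX -mulrBr Gauss_dvdpr //.
by rewrite coprimep_sym coprimep_expr // coprimepX.
Qed.

Lemma congX_prod_drop M a b (f : nat -> {poly R}) : (a <= b)%N ->
  (forall k, (a <= k < b)%N -> congX M (f k) 1) ->
  congX M (\prod_(0 <= k < b) f k) (\prod_(0 <= k < a) f k).
Proof.
move=> le_ab f1; rewrite (@big_cat_nat _ _ _ a 0 b _ _ (leq0n a) le_ab) /= -[X in congX _ _ X]mulr1.
apply: congX_mull.
have := congX_prod (index_iota a b) (P := fun k => (a <= k < b)%N) (g := fun=> 1) f1.
by rewrite big1_eq -big_nat.
Qed.

End TruncatedCongruence.

Local Close Scope ring_scope.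

Lemma bin2S k : 'C(k.+1, 2) = ('C(k, 2) + k)%N.
Proof. by rewrite binS bin1. Qed.

Lemma double_bin2 k : (2 * 'C(k.+1, 2) = k * k.+1)%N.
Proof. by elim: k => // k IH; rewrite bin2S; lia. Qed.

Lemma forall_andb (T : finType) (P Q : pred T) :
  [forall x, P x && Q x] = [forall x, P x] && [forall x, Q x].
Proof.
apply/forallP/andP => [PQ | [/forallP P_all /forallP Q_all] x]; last by rewrite P_all Q_all.
by split; apply/forallP => x; case/andP: (PQ x).
Qed.

Definition part_ok (j k a : nat) : bool :=
  (odd k && (k < 2 * j) ==> (0 < a)) && (~~ odd k && (0 < a) ==> (2 * j < k) && (a <= 1)).

Section Multiplicities.
Variable n : nat.
Implicit Types m : {ffun 'I_n.+1 -> 'I_n.+1}.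

Lemma mult_ord m (k : 'I_n.+1) : mult m k = m k.
Proof. by rewrite /mult ltn_ord inord_val. Qed.

Lemma mult_gt0 m k : 0 < mult m k -> k < n.+1.
Proof. by rewrite /mult; case: ifP. Qed.

Lemma odd_parts_occur j m :
  [forall i : 'I_j, 0 < mult m (2 * i + 1)] =
  (2 * j <= n.+1) && [forall k : 'I_n.+1, odd k && (k < 2 * j) ==> (0 < m k)].
Proof.
apply/forallP/andP => [occ | [bound /forallP occ] i].
  have bound : 2 * j <= n.+1.
    case: j occ => // j occ; have := mult_gt0 (occ ord_max); rewrite /=; lia.
  split=> //; apply/forallP => k; apply/implyP => /andP[odd_k lt_k2j].
  have k_eq : 2 * k./2 + 1 = k by have := odd_double_half k; rewrite odd_k -muln2; lia.
  have lt_kj : k./2 < j by lia.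
  by have := occ (Ordinal lt_kj); rewrite /= k_eq mult_ord.
have lt_in : 2 * i + 1 < n.+1 by have := ltn_ord i; lia.
have := occ (Ordinal lt_in); rewrite -(mult_ord m (Ordinal lt_in)) /=.
rewrite addn1 /= mul2n odd_double /= => /implyP; apply; have := ltn_ord i; lia.
Qed.

Lemma c11_condE j m :
  c11_cond j m = [&& 0 < j, 2 * j <= n.+1, [forall k : 'I_n.+1, part_ok j k (m k)]
                   & \sum_(k < n.+1) k * m k == n].
Proof.
have sum_eq : \sum_(k < n.+1) k * mult m k = \sum_(k < n.+1) k * m k.
  by apply: eq_bigr => k _; rewrite mult_ord.
have even_eq : [forall k : 'I_n.+1, ~~ odd k && (0 < mult m k) ==>
      (2 * j < k) && (mult m k <= 1)] =
    [forall k : 'I_n.+1, ~~ odd k && (0 < m k) ==> (2 * j < k) && (m k <= 1)].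
  by apply: eq_forallb => k; rewrite mult_ord.
(* The part 0 is even and not above 2j, hence absent. *)
have no_zero_part : [forall k : 'I_n.+1, ~~ odd k && (0 < m k) ==>
    (2 * j < k) && (m k <= 1)] -> mult m 0 == 0.
  by move=> /forallP /(_ ord0); rewrite -(mult_ord m ord0) /=; case: (mult m 0).
rewrite /c11_cond /is_partition odd_parts_occur sum_eq forall_andb even_eq.
case: [forall k : 'I_n.+1, ~~ odd k && _ ==> _] no_zero_part => [-> //|_];
by case: (0 < j); case: (2 * j <= n.+1); rewrite /= ?andbT ?andbF.
Qed.

End Multiplicities.

Local Open Scope ring_scope.

Lemma card_weighted_coef (R : comNzRingType) (I : finType) (n N : nat)
    (w : I -> nat) (ok : I -> nat -> bool) :
  (#|[set f : {ffun I -> 'I_n.+1} |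
      [forall i, ok i (f i)] && (\sum_i w i * f i == N)%N]|)%:R
  = (\prod_i \sum_(a < n.+1) (if ok i a then 'X^(w i * a) else 0) : {poly R})`_N.
Proof.
rewrite bigA_distr_bigA /= coef_sum -sum1_card natr_sum big_mkcond /=.
apply: eq_bigr => f _; rewrite inE.
case: (boolP [forall i, ok i (f i)]) => [/forallP allok | /forallPn [i noti]] /=.
  rewrite (eq_bigr (fun i => 'X^(w i * f i))) => [|i _]; last by rewrite allok.
  by rewrite prodrXr coefXn eq_sym; case: eqP.
by rewrite (bigD1 i) //= (negbTE noti) mul0r coef0.
Qed.

Definition partseries (R : comNzRingType) (N j k : nat) : {poly R} :=
  \sum_(a < N.+1) (if part_ok j k a then 'X^(k * a) else 0).

Definition admissible (N j : nat) : bool := (0 < j)%N && (2 * j <= N.+1)%N.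

Definition c11_series (R : comNzRingType) (N : nat) : {poly R} :=
  \sum_(j < N.+1 | admissible N j) \prod_(k < N.+1) partseries R N j k.

Lemma c11_sum N :
  c11 N = (\sum_(j < N.+1) #|[set m : {ffun 'I_N.+1 -> 'I_N.+1} | c11_cond j m]|)%N.
Proof.
rewrite /c11 -sum1_card big_set /= -(pair_big_dep xpredT
  (fun (j : 'I_N.+1) (m : {ffun 'I_N.+1 -> 'I_N.+1}) => c11_cond j m) (fun _ _ => 1%N)) /=.
by apply: eq_bigr => j _; rewrite -sum1_card big_set.
Qed.

Lemma c11_coef (R : comNzRingType) N : (c11 N)%:R = (c11_series R N)`_N.
Proof.
rewrite c11_sum natr_sum /c11_series coef_sum [RHS]big_mkcond; apply: eq_bigr => j _.
rewrite /admissible; case: (boolP ((0 < j)%N && _)) => [/andP[j_gt0 j_le] | not_adm].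
  have := card_weighted_coef R N N (fun k : 'I_N.+1 => nat_of_ord k) (part_ok j).
  rewrite /partseries => <-; congr _%:R; apply: eq_card => m.
  by rewrite !inE c11_condE j_gt0 j_le.
rewrite (_ : [set m | c11_cond j m] = set0) ?cards0 ?coef0 //.
apply/setP => m; rewrite !inE c11_condE.
by case: (0 < j)%N not_adm; case: (2 * j <= N.+1)%N.
Qed.

Section CharacteristicTwo.
Variable R : idomainType.
Hypothesis R_char2 : 2 \in [pchar R].
Local Notation P := {poly R}.
Implicit Types (p q : P) (d k n u : nat).

Lemma poly_char2 : 2 \in [pchar P].
Proof. by rewrite pchar_poly. Qed.

Lemma addpp p : p + p = 0.
Proof. exact: addrr_pchar2 poly_char2 p. Qed.

Lemma addpK p q : p + q + q = p.
Proof. by rewrite -addrA addpp addr0. Qed.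

Lemma sqrD_char2 p q : (p + q) ^+ 2 = p ^+ 2 + q ^+ 2.
Proof. by rewrite sqrrD mulr2n addpp addr0. Qed.

Lemma geometric_char2 p n : (1 + p) * \sum_(i < n) p ^+ i = 1 + p ^+ n.
Proof.
have opp := oppr_pchar2 poly_char2.
by rewrite -[1 + p]addrC -[1]opp -subrX1 opp addrC.
Qed.

Definition tailprod d k n : P := \prod_(k.+1 <= i < n.+1) (1 + 'X^(d * i)).

(* For d = 1 it interpolates Euler's product; for d = 2, u = 1 it is the
   generating function of c11, completed by j = 0 and cleared of its odd
   denominators. *)
Definition qsum d n u : P :=
  \sum_(0 <= k < n.+1) 'X^(u * k + d * 'C(k, 2)) * tailprod d k n.

Lemma tailprod_nn d n : tailprod d n n = 1.
Proof. by rewrite /tailprod big_geq. Qed.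

Lemma tailprod_recl d k n : (k < n)%N ->
  tailprod d k n = (1 + 'X^(d * k.+1)) * tailprod d k.+1 n.
Proof. by move=> lt_kn; rewrite /tailprod big_ltn. Qed.

Lemma tailprod_recr d k n : (k <= n)%N ->
  tailprod d k n.+1 = tailprod d k n * (1 + 'X^(d * n.+1)).
Proof. by move=> le_kn; rewrite /tailprod big_nat_recr. Qed.

Definition qsum_top d n u : P := 'X^(u * n.+1 + d * 'C(n.+1, 2)).

Lemma qsum_recn d n u :
  qsum d n.+1 u = (1 + 'X^(d * n.+1)) * qsum d n u + qsum_top d n u.
Proof.
rewrite /qsum big_nat_recr //= tailprod_nn mulr1 mulr_sumr; congr (_ + _).
rewrite !big_nat; apply: eq_bigr => k /andP[_ lt_kn].
rewrite tailprod_recr; last by rewrite -ltnS.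
by rewrite mulrA mulrC.
Qed.

(* Shifting u by d: the terms of (1 + X^u) qsum d n (u + d) telescope. *)
Lemma qsum_recu d n u :
  qsum d n u = (1 + 'X^u) * qsum d n (u + d) + qsum_top d n u.
Proof.
set g := fun k => 'X^(u * k + d * 'C(k, 2)) * tailprod d k n.
set a := fun k => 'X^((u + d) * k + d * 'C(k, 2)) * tailprod d k n.
have telescope k : (k < n)%N -> a k.+1 + 'X^u * a k = g k.+1.
  move=> lt_kn; rewrite /a /g (tailprod_recl _ lt_kn) mulrA -exprD bin2S.
  have -> : (u + ((u + d) * k + d * 'C(k, 2)) = u * k.+1 + d * ('C(k, 2) + k))%N
    by lia.
  have -> : ((u + d) * k.+1 + d * ('C(k, 2) + k)
             = u * k.+1 + d * ('C(k, 2) + k) + d * k.+1)%N by lia.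
  rewrite exprD; set A := 'X^(_ + _); set Y := 'X^(d * _); set T := tailprod _ _ _.
  have -> : A * Y * T + A * ((1 + Y) * T) = A * T + (A * Y * T + A * Y * T) by ring.
  by rewrite addpp addr0.
have top : 'X^u * a n = qsum_top d n u.
  by rewrite /a /qsum_top tailprod_nn mulr1 -exprD bin2S; congr 'X^_; lia.
have shift_u : qsum d n (u + d) = g 0%N + \sum_(0 <= k < n) a k.+1.
  by rewrite /qsum big_nat_recl // /g /a !muln0.
have shift_top : 'X^u * qsum d n (u + d) = \sum_(0 <= k < n) 'X^u * a k + qsum_top d n u.
  by rewrite /qsum mulr_sumr big_nat_recr //= top.
rewrite mulrDl mul1r shift_top addrA addpK shift_u -addrA -big_split /=.
rewrite /qsum big_nat_recl //; congr (_ + _).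
by rewrite !big_nat; apply: eq_bigr => k /andP[_ lt_kn]; rewrite telescope.
Qed.

Lemma qsum_trunc d n u : congX u (qsum d n u) (tailprod d 0 n).
Proof.
rewrite /qsum big_nat_recl // muln0 bin0n muln0 expr0 mul1r.
apply: congX_addr; apply: congX_sum0 => k _; apply: congX_monomial; lia.
Qed.

(* Euler's pentagonal number theorem modulo 2, as a polynomial identity: the
   exponents j^2 + C(j,2) and j^2 + C(j+1,2) are the pentagonal numbers. *)
Definition pentagonal n : P :=
  1 + \sum_(1 <= j < n.+1) ('X^(j * j + 'C(j, 2)) + 'X^(j * j + 'C(j.+1, 2))).

Lemma qsum_euler n : qsum 1 n n.+1 = pentagonal n.
Proof.
elim: n => [|n IH].
  by rewrite /qsum /pentagonal big_nat1 big_geq // tailprod_nn mulr1 addr0.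
have step : qsum 1 n.+1 n.+2 = qsum 1 n n.+1 + qsum_top 1 n n.+1 + qsum_top 1 n n.+2.
  by rewrite qsum_recn [in RHS](qsum_recu _ _ n.+1) addn1 addpK mul1n.
rewrite step IH /pentagonal [in RHS]big_nat_recr //= -!addrA /qsum_top.
by congr (_ + (_ + ('X^_ + 'X^_))); have := bin2S n.+1; lia.
Qed.

Lemma euler_product n : congX n.+1 (tailprod 1 0 n) (pentagonal n).
Proof. by rewrite -qsum_euler; apply: congX_sym; apply: qsum_trunc. Qed.

Definition oddprod s : P := \prod_(0 <= i < s) (1 + 'X^(2 * i + 1)).

Lemma oddprod_recr s : oddprod s.+1 = oddprod s * (1 + 'X^(2 * s + 1)).
Proof. by rewrite /oddprod big_nat_recr. Qed.

Lemma oddprod_root s : ~~ root (oddprod s) 0.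
Proof.
rewrite /root /oddprod horner_prod big1 ?oner_eq0 // => i _.
by rewrite hornerD hornerC hornerXn expr0n addnS /= addr0.
Qed.

(* Peeling off the factors 1 + X^(2i+1) one at a time from the d = 2 sum:
   the boundary terms all have degree >= (n+1)^2. *)
Lemma qsum2_peel n m :
  congX (n.+1 * n.+1) (qsum 2 n 1) (oddprod m * qsum 2 n (2 * m + 1)).
Proof.
elim: m => [|m IH]; first by rewrite /oddprod big_geq // mul1r; apply: congX_refl.
apply: congX_trans IH _; rewrite (qsum_recu _ _ (2 * m + 1)) oddprod_recr.
rewrite mulrDr mulrA (_ : 2 * m + 1 + 2 = 2 * m.+1 + 1)%N; last by lia.
apply: congX_addr; rewrite mulrC /qsum_top; apply: congX_monomial.
by have := double_bin2 n; nia.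
Qed.

Lemma qsum2_product n : congX n.+1 (qsum 2 n 1) (oddprod n * tailprod 2 0 n).
Proof.
apply: congX_trans (congX_le _ (qsum2_peel n n)) _; first nia.
by apply: congX_mull; apply: congX_le (qsum_trunc 2 n (2 * n + 1)); lia.
Qed.

(* The terms of the finite form of Gauss's identity: for m = n the sum below is
   oddprod n times the theta series of triangular numbers. *)
Definition gterm n m s : P := 'X^(s * (2 * m + 1)) * tailprod 2 s n * oddprod s.
Definition gsum n m : P := \sum_(0 <= s < n.+1) gterm n m s.
Definition triseries k : P := \sum_(0 <= j < k.+1) 'X^('C(j.+1, 2)).

Lemma gsum_recn n m :
  gsum n.+1 m = (1 + 'X^(2 * n.+1)) * gsum n m + 'X^(n.+1 * (2 * m + 1)) * oddprod n.+1.
Proof.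
rewrite /gsum big_nat_recr //= /gterm tailprod_nn mulr1 mulr_sumr; congr (_ + _).
rewrite !big_nat; apply: eq_bigr => s /andP[_ lt_sn].
by rewrite /gterm tailprod_recr; [ring | rewrite -ltnS].
Qed.

Lemma gsum_recm n m :
  gsum n m + gsum n m.+1 =
  'X^(2 * m + 1) * (gsum n m + gterm n m n + 'X * (gsum n m.+1 + gterm n m.+1 n)).
Proof.
have pair_sum : gsum n m + gsum n m.+1 =
    \sum_(0 <= t < n) (gterm n m t.+1 + gterm n m.+1 t.+1).
  by rewrite /gsum -big_split big_nat_recl //= /gterm !mul0n expr0 addpp add0r.
have drop_top k : gsum n k + gterm n k n = \sum_(0 <= t < n) gterm n k t.
  by rewrite /gsum big_nat_recr //= addpK.
rewrite pair_sum !drop_top mulr_sumr -big_split /= mulr_sumr.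
rewrite !big_nat; apply: eq_bigr => t /andP[_ lt_tn].
rewrite /gterm (tailprod_recl _ lt_tn) oddprod_recr.
have -> : (t.+1 * (2 * m + 1) = 2 * m + 1 + t * (2 * m + 1))%N by lia.
have -> : (t.+1 * (2 * m.+1 + 1) = 2 * m + 1 + t * (2 * m + 1) + (2 * t + 2))%N by lia.
have -> : (t * (2 * m.+1 + 1) = t * (2 * m + 1) + 2 * t)%N by lia.
have -> : (2 * t.+1 = 2 * t + 2)%N by lia.
by rewrite !exprD expr1; ring.
Qed.

Lemma triseries_recSS n :
  triseries (2 * n.+1) = triseries (2 * n) + 'X^('C((2 * n).+2, 2)) + 'X^('C((2 * n).+3, 2)).
Proof.
by rewrite /triseries (_ : (2 * n.+1).+1 = (2 * n).+3)%N ?big_nat_recr ?addrA //; lia.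
Qed.

Lemma gsum_gauss n : gsum n n = oddprod n * triseries (2 * n).
Proof.
elim: n => [|n IH].
  by rewrite /gsum /triseries !big_nat1 /gterm tailprod_nn /oddprod big_geq // mul0n bin_small // expr0 !mulr1.
rewrite gsum_recn.
have shift : (1 + 'X^(2 * n.+1)) * gsum n n.+1 =
    (1 + 'X^(2 * n + 1)) * gsum n n + 'X^(2 * n + 1) * gterm n n n
    + 'X^(2 * n + 1) * 'X * gterm n n.+1 n.
  have X2 : 'X^(2 * n.+1) = 'X^(2 * n + 1) * 'X :> P.
    by rewrite -exprSr; congr 'X^_; lia.
  apply/eqP; rewrite -subr_eq0 (oppr_pchar2 poly_char2) X2.
  set U := 'X^(2 * n + 1).
  suff -> : (1 + U * 'X) * gsum n n.+1 + ((1 + U) * gsum n n + U * gterm n n n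
      + U * 'X * gterm n n.+1 n) =
    (gsum n n + gsum n n.+1) + U * (gsum n n + gterm n n n + 'X * (gsum n n.+1 + gterm n n.+1 n)).
    by rewrite gsum_recm addpp.
  by ring.
rewrite shift IH oddprod_recr triseries_recSS /gterm tailprod_nn !mulr1.
have dbl := double_bin2 (2 * n); have C2 := bin2S (2 * n).+1; have C3 := bin2S (2 * n).+2.
set c := 'C((2 * n).+1, 2) in dbl C2 C3 *.
have -> : (n * (2 * n + 1) = c)%N by nia.
have -> : (n * (2 * n.+1 + 1) = c + 2 * n)%N by nia.
have -> : (n.+1 * (2 * n.+1 + 1) = c + 2 * n + 1 + 2 * n + 1 + 1)%N by nia.
have -> : ('C((2 * n).+2, 2) = c + 2 * n + 1)%N by lia.
have -> : ('C((2 * n).+3, 2) = c + 2 * n + 1 + 2 * n + 1 + 1)%N by lia.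
by rewrite !exprD !expr1; ring.
Qed.

Lemma gsum_trunc n : congX (2 * n + 1) (gsum n n) (tailprod 2 0 n).
Proof.
rewrite /gsum big_nat_recl //= /gterm mul0n expr0 mul1r /oddprod big_geq // mulr1.
apply: congX_addr; apply: congX_sum0 => k _; rewrite -mulrA; apply: congX_monomial; nia.
Qed.

(* An odd part k contributes 1/(1 + X^k), times X^k when it is forced to
   occur (k < 2j). *)
Lemma partseries_odd N j k : odd k -> (k < N.+1)%N ->
  congX N.+1 ((1 + 'X^k) * partseries R N j k) ('X^(if (k < 2 * j)%N then k else 0)).
Proof.
move=> odd_k lt_kN; rewrite /partseries.
have k_gt0 : (0 < k)%N by case: k odd_k {lt_kN}.
case: ltnP => [lt_k2j | le_2jk].
  rewrite big_ord_recl {1}/part_ok odd_k lt_k2j /= add0r.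
  rewrite (eq_bigr (fun i : 'I_N => 'X^k * 'X^k ^+ i)) => [|i _]; last first.
    by rewrite /part_ok odd_k lt_k2j /= exprM exprS.
  rewrite -mulr_sumr mulrCA geometric_char2 mulrDr mulr1 -exprS -exprM.
  apply: congX_addr; rewrite -[X in congX _ X _]mulr1; apply: congX_monomial; nia.
rewrite (eq_bigr (fun i : 'I_N.+1 => 'X^k ^+ i)) => [|i _]; last first.
  by rewrite /part_ok odd_k /= (_ : (k < 2 * j)%N = false) ?exprM //; lia.
rewrite geometric_char2 expr0 -exprM; apply: congX_addr.
by rewrite -[X in congX _ X _]mulr1; apply: congX_monomial; nia.
Qed.

Lemma partseries_even N j k : ~~ odd k -> (k < N.+1)%N ->
  partseries R N j k = if (2 * j < k)%N then 1 + 'X^k else 1.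
Proof.
move=> even_k lt_kN; rewrite /partseries big_ord_recl /part_ok (negbTE even_k) /= muln0.
case: ltnP => [lt_2jk | le_k2j].
  case: N lt_kN => [|N] lt_kN; first by lia.
  by rewrite big_ord_recl /= muln1 big1_eq addr0.
by rewrite big1_eq addr0 expr0.
Qed.

Definition oddfactor k : P := if odd k then 1 + 'X^k else 1.
Definition evenfactor j k : P := if ~~ odd k && (2 * j < k)%N then 1 + 'X^k else 1.

Lemma oddfactor_prod n : \prod_(0 <= k < 2 * n) oddfactor k = oddprod n.
Proof.
elim: n => [|n IH]; first by rewrite /oddprod !big_geq.
rewrite (_ : 2 * n.+1 = (2 * n).+2)%N; last by lia.
rewrite !big_nat_recr //= IH oddprod_recr /oddfactor /= mul2n odd_double /= mulr1.
by rewrite addn1.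
Qed.

Lemma evenfactor_prod j n : \prod_(0 <= k < (2 * n).+1) evenfactor j k = tailprod 2 j n.
Proof.
elim: n => [|n IH]; first by rewrite big_nat1 /evenfactor /tailprod big_geq.
rewrite (_ : (2 * n.+1).+1 = (2 * n).+3)%N; last by lia.
rewrite big_nat_recr //= big_nat_recr //= IH /evenfactor /= mul2n odd_double /= mulr1 -mul2n.
case: (leqP j n) => [le_jn | lt_nj].
  have -> : (2 * j < (2 * n).+2)%N by lia.
  by rewrite tailprod_recr // (_ : (2 * n).+2 = 2 * n.+1)%N //; lia.
rewrite (_ : (2 * j < (2 * n).+2)%N = false); last by lia.
by rewrite mulr1 /tailprod !big_geq //; lia.
Qed.

Lemma sum_odd_below j : (\sum_(0 <= k < 2 * j) (if odd k then k else 0) = j * j)%N.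
Proof.
elim: j => [|j IH]; first by rewrite big_geq.
rewrite (_ : 2 * j.+1 = (2 * j).+2)%N; last by lia.
by rewrite !big_nat_recr //= IH mul2n odd_double /=; lia.
Qed.

Lemma partseries_factor N j k : (k < N.+1)%N ->
  congX N.+1 (oddfactor k * partseries R N j k)
    ('X^(if odd k && (k < 2 * j)%N then k else 0) * evenfactor j k).
Proof.
move=> lt_kN; rewrite /oddfactor /evenfactor.
case: (boolP (odd k)) => [odd_k | even_k] /=.
  by rewrite mulr1; apply: partseries_odd.
by rewrite mul1r expr0 mul1r partseries_even //; apply: congX_refl.
Qed.

Lemma partseries_prod N j : admissible N j ->
  congX N.+1 (oddprod N * \prod_(k < N.+1) partseries R N j k) ('X^(j * j) * tailprod 2 j N).
Proof.
case/andP=> j_gt0 le_2jN.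
have odd_trunc : congX N.+1 (oddprod N) (\prod_(0 <= k < N.+1) oddfactor k).
  rewrite -oddfactor_prod; apply: congX_prod_drop => [|k /andP[le_Nk _]]; first lia.
  rewrite /oddfactor; case: odd; last exact: congX_refl.
  by apply: congX_addr; rewrite -[X in congX _ X _]mulr1; apply: congX_monomial.
have even_trunc : congX N.+1 (\prod_(0 <= k < N.+1) evenfactor j k) (tailprod 2 j N).
  rewrite -evenfactor_prod; apply: congX_sym; apply: congX_prod_drop => [|k /andP[le_Nk _]].
    by lia.
  rewrite /evenfactor; case: ifP => _; last exact: congX_refl.
  by apply: congX_addr; rewrite -[X in congX _ X _]mulr1; apply: congX_monomial.
have exponent : (\sum_(k < N.+1) (if odd k && (k < 2 * j)%N then nat_of_ord k else 0)
                 = j * j)%N.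
  rewrite -sum_odd_below -(big_mkord xpredT (fun k => if odd k && (k < 2 * j)%N then k else 0)).
  rewrite (@big_cat_nat _ _ _ (2 * j) 0 N.+1 _ _ (leq0n _) le_2jN) /= [X in (_ + X)%N]big1_seq ?addn0.
    by rewrite !big_nat; apply: eq_bigr => k /andP[_ ->]; rewrite andbT.
  by move=> k /andP[_]; rewrite mem_index_iota => /andP[le_2jk _]; rewrite ltnNge le_2jk andbF.
apply: congX_trans (congX_mul odd_trunc (congX_refl _ _)) _.
rewrite big_mkord -big_split /=.
apply: congX_trans (congX_prod _ (fun (k : 'I_N.+1) _ => partseries_factor j (ltn_ord k))) _.
by rewrite big_split /= prodrXr exponent; apply: congX_mull; rewrite -(big_mkord xpredT).
Qed.

Lemma tailprod_sq d k n : tailprod d k n ^+ 2 = tailprod (2 * d) k n.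
Proof.
rewrite /tailprod -prodrXl; apply: eq_bigr => i _.
by rewrite sqrD_char2 expr1n -exprM mulnC mulnA.
Qed.

(* qsum 2 N 1 = sum_j X^(j^2) tailprod 2 j N splits into the term j = 0 and the
   admissible terms; the remaining terms have 2j > N + 1, so j^2 > N. *)
Lemma qsum2_split N : congX N.+1 (qsum 2 N 1)
  (tailprod 2 0 N + \sum_(j < N.+1 | admissible N j) 'X^(j * j) * tailprod 2 j N).
Proof.
have -> : qsum 2 N 1 = \sum_(j < N.+1) 'X^(j * j) * tailprod 2 j N.
  rewrite /qsum big_mkord; apply: eq_bigr => -[[|j] _ _] //=.
  by rewrite double_bin2; congr ('X^_ * _); lia.
rewrite (bigID (fun j : 'I_N.+1 => admissible N j)) /= addrC.
apply: congX_add; last exact: congX_refl.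
rewrite (bigD1 ord0) //= mul0n expr0 mul1r; apply: congX_addr.
apply: congX_sum0 => j /andP[not_adm j_neq0]; apply: congX_monomial.
move: j_neq0 not_adm; rewrite -val_eqE /admissible /= -lt0n => -> /=.
by rewrite -ltnNge => lt_N2j; nia.
Qed.

Lemma c11_series_congr N :
  congX N.+1 (c11_series R N) (tailprod 2 0 N + triseries (2 * N)).
Proof.
have series : congX N.+1 (oddprod N * c11_series R N)
    (\sum_(j < N.+1 | admissible N j) 'X^(j * j) * tailprod 2 j N).
  by rewrite /c11_series mulr_sumr; apply: congX_sum => j; apply: partseries_prod.
have split : congX N.+1
    (\sum_(j < N.+1 | admissible N j) 'X^(j * j) * tailprod 2 j N)
    (qsum 2 N 1 + tailprod 2 0 N).
  have := congX_add (qsum2_split N) (congX_refl N.+1 (tailprod 2 0 N)).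
  by rewrite [X in congX _ _ X]addrC addrA addpp add0r => /congX_sym.
have gauss : congX N.+1 (tailprod 2 0 N) (oddprod N * triseries (2 * N)).
  by rewrite -gsum_gauss; apply: congX_sym; apply: congX_le (gsum_trunc N); lia.
apply: (congX_cancel (oddprod_root N)); apply: congX_trans series _.
apply: congX_trans split _; rewrite mulrDr.
by apply: congX_add; [apply: qsum2_product | apply: gauss].
Qed.

End CharacteristicTwo.

Local Close Scope ring_scope.

Definition excluded (N : nat) : bool := [|| N %% 11 == 5, N %% 11 == 7 | N %% 11 == 9].

Lemma quadratic_modn d a b c j :
  a * j * j + b * j + c = a * (j %% d) * (j %% d) + b * (j %% d) + c %[mod d].
Proof.
rewrite {1 2 3}(divn_eq j d); set q := j %/ d; set r := j %% d.
have -> : a * (q * d + r) * (q * d + r) + b * (q * d + r) + c =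
          (a * q * q * d + 2 * a * q * r + b * q) * d + (a * r * r + b * r + c) by nia.
by rewrite modnMDl.
Qed.

Lemma quadratic_not_excluded a b c :
  [forall r : 'I_11, ~~ excluded (a * r * r + b * r + c)] ->
  forall j, ~~ excluded (a * j * j + b * j + c).
Proof.
move=> /forallP residues j; have := residues (Ordinal (ltn_pmod j (isT : 0 < 11))).
by rewrite /excluded /= -quadratic_modn.
Qed.

Lemma excluded_pentagonal_lo N j : excluded N -> N != (j.+1 * j.+1 + 'C(j.+1, 2)) * 2.
Proof.
move=> exN; apply: contraTneq exN => ->.
have -> : ((j.+1 * j.+1 + 'C(j.+1, 2)) * 2 = 3 * j * j + 5 * j + 2)%N.
  by have := double_bin2 j; lia.
apply: quadratic_not_excluded; apply/forallP => -[r lt_r].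
by do 11?case: r lt_r => [|r] lt_r //.
Qed.

Lemma excluded_pentagonal_hi N j : excluded N -> N != (j * j + 'C(j.+1, 2)) * 2.
Proof.
move=> exN; apply: contraTneq exN => ->.
have -> : ((j * j + 'C(j.+1, 2)) * 2 = 3 * j * j + 1 * j + 0)%N.
  by have := double_bin2 j; lia.
apply: quadratic_not_excluded; apply/forallP => -[r lt_r].
by do 11?case: r lt_r => [|r] lt_r //.
Qed.

(* For triangular N = j(j+1)/2 one has N = 12 N = 6 j^2 + 6 j modulo 11. *)
Lemma excluded_triangular N j : excluded N -> N != 'C(j.+1, 2).
Proof.
move=> exN; apply: contraTneq exN => ->.
have mod11 : 'C(j.+1, 2) = 6 * j * j + 6 * j + 0 %[mod 11].
  have -> : (6 * j * j + 6 * j + 0 = 'C(j.+1, 2) * 11 + 'C(j.+1, 2))%N.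
    by have := double_bin2 j; lia.
  by rewrite modnMDl.
have := @quadratic_not_excluded 6 6 0 _ j; rewrite /excluded mod11; apply.
apply/forallP => -[r lt_r]; by do 11?case: r lt_r => [|r] lt_r //.
Qed.

Local Open Scope ring_scope.

Section Parity.
Local Notation F2 := 'F_2.

Lemma F2_char2 : 2 \in [pchar F2].
Proof. exact: pchar_Fp. Qed.

(* The square of the pentagonal series is supported on twice the pentagonal
   numbers, hence misses the excluded residues. *)
Lemma coef_pentagonal_sq n N : excluded N -> (pentagonal F2 n ^+ 2)`_N = 0.
Proof.
move=> exN; rewrite /pentagonal sqrD_char2 ?F2_char2 // expr1n coefD coef1.
rewrite (big_morph _ (sqrD_char2 F2_char2) (expr0n _ 2)) coef_sum big_nat.
rewrite big1 ?addr0 => [|[//|j] _]; first by case: N exN.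
rewrite sqrD_char2 ?F2_char2 // -!exprM coefD !coefXn.
by rewrite (negbTE (excluded_pentagonal_lo j exN)) (negbTE (excluded_pentagonal_hi j.+1 exN)) addr0.
Qed.

Lemma coef_triseries k N : excluded N -> (triseries F2 k)`_N = 0.
Proof.
move=> exN; rewrite /triseries coef_sum big1 // => j _.
by rewrite coefXn (negbTE (excluded_triangular j exN)).
Qed.

Lemma coef_c11_series N : excluded N -> (c11_series F2 N)`_N = 0.
Proof.
move=> exN; rewrite (congX_coef (c11_series_congr F2_char2 N) (ltnSn N)) coefD.
have euler_sq : congX N.+1 (tailprod F2 2 0 N) (pentagonal F2 N ^+ 2).
  have -> : tailprod F2 2 0 N = tailprod F2 1 0 N ^+ 2 by rewrite tailprod_sq ?F2_char2.
  exact: congX_mul (euler_product F2_char2 N) (euler_product F2_char2 N).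
rewrite (congX_coef euler_sq (ltnSn N)).
by rewrite coef_pentagonal_sq // coef_triseries // addr0.
Qed.

Lemma c11_even N : excluded N -> c11 N = 0 %[mod 2].
Proof.
move=> exN; apply/eqP; rewrite mod0n -/(dvdn 2 _).
by rewrite (dvdn_pcharf F2_char2) (c11_coef F2) coef_c11_series.
Qed.

End Parity.

Theorem mainTheorem12 (n : nat) :
  [/\ c11 (11 * n + 5) = 0 %[mod 2],
      c11 (11 * n + 7) = 0 %[mod 2] &
      c11 (11 * n + 9) = 0 %[mod 2]].
Proof.
by split; apply: c11_even; rewrite /excluded mulnC modnMDl.
Qed.
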